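(* Consider a link of constant bit rate $c>0$ shared by several FIFO queues under non-preemptive strict priority scheduling, and consider the highest-priority queue, whose input flow consists of packets of positive length. Let $l^{M_l}$ denote the maximum packet length of all lower-priority queues. Then $\beta(t)=c\left(t-\frac{l^{M_l}}{c}\right)^{+}$ is neither a strict service curve nor a service curve for the highest-priority queue; that is, there exist traffic patterns for which the strict service curve inequality fails and traffic patterns and times $t\ge0$ with $A^{*}(t)<\inf_{0\le s\le t}\{A(s)+\beta(t-s)\}$, where $A,A^{*}$ are the cumulative input and output of the highest-priority queue.
   Context: $(x)^{+}=\max\{x,0\}$. Non-preemptive strict priority: whenever the link is free, it starts transmitting the head packet of the highest-priority nonempty queue; a packet in transmission is never interrupted. Packets have arrival times $a(n)$, departure times $d(n)$ and lengths $l(n)>0$ bits. By convention, a packet is said to have arrived (respectively, been served) when and only when its last bit has arrived (respectively, departed). $A(t)$ is the cumulative amount of traffic (sum of packet lengths) of the highest-priority flow that has arrived in $[0,t)$ and $A^{*}(t)$ the amount that has been served in $[0,t)$; $A(0)=A^{*}(0)=0$, $A(s,t)=A(t)-A(s)$, $A^{*}(s,t)=A^{*}(t)-A^{*}(s)$. Queues have infinite buffers and are initially empty. With $\mathcal{F}_0$ the set of nonnegative nondecreasing functions vanishing at $0$, $\beta\in\mathcal{F}_0$ is a service curve if $A^{*}(t)\ge\inf_{0\le s\le t}\{A(s)+\beta(t-s)\}$ for all $t\ge0$, and a strict service curve if for every backlogged period $(s,t]$ of the queue, $A^{*}(s,t)\ge\beta(t-s)$. *)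

From HB Require Import structures.
From mathcomp Require Import all_boot all_order all_algebra.
From mathcomp Require Import boolp classical_sets reals.
Set Implicit Arguments. Unset Strict Implicit. Unset Printing Implicit Defensive.
Import Order.TTheory GRing.Theory Num.Theory.
Local Open Scope ring_scope.
Local Open Scope classical_set_scope.

(* A (finite) traffic pattern together with its transmission schedule on a
   link shared by k.+1 FIFO queues; queue 0 is the highest priority,
   a smaller queue index means a higher priority. *)
Record pattern (R : realType) (k : nat) := Pattern {
  np    : nat;
  queue : 'I_np -> 'I_k.+1;
  arr   : 'I_np -> R;         (* arrival time a(n) (last bit arrived) *)
  len   : 'I_np -> R;
  start : 'I_np -> R
}.

Section Defs.
Variables (R : realType) (k : nat).
Implicit Types (P : pattern R k) (c : R).

Definition dep c P (n : 'I_(np P)) : R := start n + len n / c.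

(* P is an execution of a constant-rate-c link under non-preemptive
   strict priority scheduling with FIFO queues (infinite buffers, initially
   empty, work conserving). *)
Definition valid_npsp c P : Prop :=
  (forall n : 'I_(np P), 0 <= arr n) /\
  (forall n : 'I_(np P), 0 < len n) /\
      (* store and forward: a packet can be sent only once it has arrived *)
      (forall n : 'I_(np P), arr n <= start n) /\
      (* one packet at a time, each sent without interruption at rate c *)
      (forall m n : 'I_(np P), m != n -> dep c m <= start n \/ dep c n <= start m) /\
      (* FIFO within each queue *)
      (forall m n : 'I_(np P), queue m = queue n -> arr m < arr n -> start m < start n) /\
      (* strict priority: when n starts, no higher-priority packet waits *)
      (forall m n : 'I_(np P), (queue m < queue n)%N -> arr m <= start n -> start m < start n) /\
      (* work conserving: the link is busy whenever some packet waits *)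
      (forall (t : R) (n : 'I_(np P)), arr n <= t < start n ->
         exists m : 'I_(np P), start m <= t < dep c m).

(* cumulative arrivals / departures of the highest-priority flow in [0,t) *)
Definition Acum P (t : R) : R :=
  \sum_(n < np P | (queue n == ord0) && (arr n < t)) len n.
Definition Adep c P (t : R) : R :=
  \sum_(n < np P | (queue n == ord0) && (dep c n < t)) len n.

Definition lmax_low P : R :=
  \big[Num.max/0]_(n < np P | queue n != ord0) len n.

End Defs.

Definition posp (R : realType) (x : R) : R := Num.max x 0.

Definition beta_npsp (R : realType) (c L : R) (t : R) : R := c * posp (t - L / c).

Definition service_curve (R : realType) (A Astar beta : R -> R) : Prop :=
  forall t, 0 <= t -> inf [set A s + beta (t - s) | s in [set s | 0 <= s <= t]] <= Astar t.

(* (s,t] is a backlogged period: the queue is nonempty at every u in (s,t] *)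
Definition backlogged (R : realType) (A Astar : R -> R) (s t : R) : Prop :=
  0 <= s <= t /\ forall u, s < u <= t -> Astar u < A u.

Definition strict_service_curve (R : realType) (A Astar beta : R -> R) : Prop :=
  forall s t, backlogged A Astar s t -> beta (t - s) <= Astar t - Astar s.

(* One high-priority packet of length [L] arrives at time [L/(2c)], just after
   a lower-priority packet of the same length has started its transmission at
   time 0.  Non-preemption makes it wait until [L/c], so it leaves only at
   [2L/c], and until then nothing of the highest-priority flow counts as
   served.  The fluid curve [beta] however promises [L/2] bits by [2L/c],
   both over the backlogged period [(L/(2c), 2L/c]] and against
   [inf_s A(s) + beta(2L/c - s)], since only whole departed packets are
   counted in [A*]. *)
From HB Require Import structures.
From mathcomp Require Import all_boot all_order all_algebra.
From mathcomp Require Import boolp classical_sets reals.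
From mathcomp Require Import lra.
Import Order.TTheory GRing.Theory Num.Theory.
Local Open Scope ring_scope.

Lemma beta_npsp_ge0 {R : realType} (c L t : R) : 0 <= c -> 0 <= beta_npsp c L t.
Proof. by move=> c_ge0; rewrite mulr_ge0 // le_max lexx orbT. Qed.

Lemma beta_npsp_shift {R : realType} (c L x : R) :
  0 <= x -> beta_npsp c L (L / c + x) = c * x.
Proof. by move=> x_ge0; rewrite /beta_npsp /posp addrAC subrr add0r max_l. Qed.

Lemma lb_le_minplus_inf {R : realType} (A beta : R -> R) (t b : R) : 0 <= t ->
  (forall s, 0 <= s <= t -> b <= A s + beta (t - s)) ->
  b <= inf [set A s + beta (t - s) | s in [set s | 0 <= s <= t]].
Proof.
move=> t_ge0 lb; apply: lb_le_inf; first by exists (A 0 + beta (t - 0)), 0; rewrite //= lexx t_ge0.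
by move=> _ [s s0t <-]; exact: lb.
Qed.

Definition tx_time {R : realType} (c l : R) : R := l / c.

Section Counterexample.
Context {R : realType} {k : nat} (c L : R).
Hypotheses (k_gt0 : (0 < k)%N) (c_gt0 : 0 < c) (L_gt0 : 0 < L).

Let low_queue : 'I_k.+1 := Ordinal (k_gt0 : (1 < k.+1)%N).
Local Notation d := (tx_time c L).

Definition blocked_pattern : pattern R k :=
  @Pattern R k 2
    (fun i => if val i == 0%N then ord0 else low_queue)
    (fun i => if val i == 0%N then d / 2 else 0)
    (fun=> L)
    (fun i => if val i == 0%N then d else 0).

Let d_gt0 : 0 < d. Proof. exact: divr_gt0. Qed.

Let mul_rate_d : c * d = L. Proof. by rewrite /tx_time mulrC divfK ?lt0r_neq0. Qed.

Let dep_blocked_pattern (i : 'I_2) :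
  dep c (i : 'I_(np blocked_pattern)) = if val i == 0%N then 2 * d else d.
Proof. by rewrite /dep /= -/(tx_time c L); case: ifP => _; lra. Qed.

Lemma valid_blocked_pattern : valid_npsp c blocked_pattern.
Proof.
have d_pos := d_gt0; have /= dep_ex := dep_blocked_pattern.
rewrite /valid_npsp /=.
split; [|split; [|split; [|split; [|split; [|split]]]]].
- by case=> [[|[|//]]] ? /=; lra.
- by [].
- by case=> [[|[|//]]] ? /=; lra.
- case=> [[|[|//]]] ? [[|[|//]]] ? //= _; rewrite !dep_ex /=; [right|left]; lra.
- by case=> [[|[|//]]] ? [[|[|//]]] ? //=; try lra; move=> /(congr1 val).
- by case=> [[|[|//]]] ? [[|[|//]]] ? //= _; lra.
- move=> t [[|[|//]]] ? /= /andP[arr_le lt_start]; last lra.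
  exists (Ordinal (isT : (1 < 2)%N)); rewrite dep_ex /=; lra.
Qed.

Lemma lmax_low_blocked_pattern : lmax_low blocked_pattern = L.
Proof.
rewrite /lmax_low unlock /= /index_enum /= -enumT !enum_ordSl enum_ord0 /=.
by rewrite max_l // ltW.
Qed.

Lemma Acum_blocked_pattern s : Acum blocked_pattern s = if d / 2 < s then L else 0.
Proof.
rewrite /Acum big_mkcond /= !big_ord_recl big_ord0 /=.
by case: ifP => _; rewrite ?addr0.
Qed.

Lemma Adep_blocked_pattern t : Adep c blocked_pattern t = if 2 * d < t then L else 0.
Proof.
rewrite /Adep big_mkcond /= !big_ord_recl big_ord0 /=.
rewrite (dep_blocked_pattern ord0) /=.
by case: ifP => _; rewrite ?addr0.
Qed.

Lemma backlogged_blocked_pattern :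
  backlogged (Acum blocked_pattern) (Adep c blocked_pattern) (d / 2) (2 * d).
Proof.
split; first by apply/andP; split; have := d_gt0; lra.
move=> u /andP[lt_u u_le].
by rewrite Acum_blocked_pattern Adep_blocked_pattern lt_u (ltNge (2 * d)) u_le.
Qed.

Lemma blocked_pattern_not_strict :
  ~ strict_service_curve (Acum blocked_pattern) (Adep c blocked_pattern) (beta_npsp c L).
Proof.
(* [lra] ignores section hypotheses and [Let]s, hence the local copies. *)
have d_pos := d_gt0; have L_pos := L_gt0.
move=> /(_ _ _ backlogged_blocked_pattern).
have -> : 2 * d - d / 2 = d + d / 2 by lra.
rewrite beta_npsp_shift; last lra.
rewrite !Adep_blocked_pattern ltxx ifF; last by apply/negbTE; rewrite -leNgt; lra.
by rewrite subrr mulrA mul_rate_d; lra.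
Qed.

Lemma blocked_pattern_not_service :
  Adep c blocked_pattern (2 * d) <
  inf [set Acum blocked_pattern s + beta_npsp c L (2 * d - s) | s in [set s | 0 <= s <= 2 * d]].
Proof.
have d_pos := d_gt0; have L_pos := L_gt0.
rewrite Adep_blocked_pattern ltxx.
apply: (@lt_le_trans _ _ (L / 2)); first lra.
apply: lb_le_minplus_inf => [|s /andP[s_ge0 _]]; first lra.
rewrite Acum_blocked_pattern; case: (ltP (d / 2) s) => [_|s_le].
  by have := beta_npsp_ge0 c L (2 * d - s) (ltW c_gt0); lra.
have -> : 2 * d - s = d + (d - s) by lra.
rewrite add0r beta_npsp_shift; last lra.
have cs_le : c * s <= L / 2.
  by rewrite -mul_rate_d -mulrA; apply: ler_wpM2l => //; exact: ltW.
by rewrite mulrBr mul_rate_d; lra.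
Qed.

End Counterexample.

Theorem proposition3 (R : realType) (k : nat) (c L : R) :
  (0 < k)%N -> 0 < c -> 0 < L ->
  (exists P : pattern R k,
     [/\ valid_npsp c P, lmax_low P = L &
         ~ strict_service_curve (Acum P) (Adep c P) (beta_npsp c L)]) /\
  (exists P : pattern R k,
     [/\ valid_npsp c P, lmax_low P = L &
         exists t, 0 <= t /\
           Adep c P t < inf [set Acum P s + beta_npsp c L (t - s) | s in [set s | 0 <= s <= t]]]).
Proof.
move=> k_gt0 c_gt0 L_gt0.
have valid := valid_blocked_pattern c L k_gt0 c_gt0 L_gt0.
have lmax := lmax_low_blocked_pattern c L k_gt0 L_gt0.
split; exists (blocked_pattern c L k_gt0); (split; [exact: valid | exact: lmax |]).
- exact: (blocked_pattern_not_strict c L k_gt0 c_gt0 L_gt0).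
- exists (2 * tx_time c L); split; first by rewrite mulr_ge0 // divr_ge0 ?ltW.
  exact: (blocked_pattern_not_service c L k_gt0 c_gt0 L_gt0).
Qed.
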